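(* Let $m,n,k$ be positive integers with $k<n$, $A\in\mathbb{R}^{m\times n}$, $x^*\in\mathbb{R}^n$ with support $S^*$ satisfying $1\le|S^*|\le k$, $e\in\mathbb{R}^m$, $y=Ax^*+e$. Let $\mathcal{X}^0\in\mathbb{R}^n$, $\eta>0$, let $(S^t,x^t,\mathcal{X}^t)_{t\ge0}$ be generated by SEA, $b^t=u^t-\eta A^T(Ax^t-y)$ and $B=\sup_{t\in\mathbb{N}}\|b^t\|_\infty$. Assume $$B<\frac{1}{2\sum_{i\in S^*}\frac{1}{\eta|x^*_i|}},$$ and set $$T'_{max}=\frac{\sum_{i\in S^*}\frac{\max_{j\notin S^*}|\mathcal{X}^0_j|+|\mathcal{X}^0_i|}{\eta|x^*_i|}+k+1}{1-2B\sum_{i\in S^*}\frac{1}{\eta|x^*_i|}},\qquad \tau_i=\frac{\max_{j\notin S^*}|\mathcal{X}^0_j|+|\mathcal{X}^0_i|+2T'_{max}B}{\eta|x^*_i|}\ (i\in S^* ).$$ Then for every $i\in S^*$ and every integer $t\le T'_{max}$, $c^t_i\le\tau_i+1$.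
   Context: $S^*=\{i:x^*_i\neq0\}$. For $v\in\mathbb{R}^n$, $\mathrm{largest}_k(v)$ is the set of indices of the $k$ entries of $v$ with largest absolute value (ties broken by selecting the highest indices). For $S\subseteq\{1,\dots,n\}$, $A_S$ is the submatrix of columns indexed by $S$, $v_S$ the restriction of a vector to $S$, $A_S^\dagger$ the Moore–Penrose pseudoinverse of $A_S$. SEA with initialization $\mathcal{X}^0$ and step size $\eta$ generates, for $t=0,1,2,\dots$: $S^t=\mathrm{largest}_k(\mathcal{X}^t)$; $x^t_i=0$ for $i\notin S^t$ and $x^t_{S^t}=A_{S^t}^\dagger y$; $\mathcal{X}^{t+1}=\mathcal{X}^t-\eta A^T(Ax^t-y)$. The oracle direction is $u^t_i=-\eta x^*_i$ if $i\in S^*\setminus S^t$ and $u^t_i=0$ otherwise. The counts are $c^0_i=0$ and, for $t\ge1$, $c^t_i=|\{t'\in\{0,\dots,t-1\}: i\in S^*\setminus S^{t'}\}|$. *)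

From HB Require Import structures.
From mathcomp Require Import all_boot all_order all_algebra.
From mathcomp Require Import boolp classical_sets reals constructive_ereal ereal.
From Stdlib Require Import ClassicalEpsilon.
Set Implicit Arguments. Unset Strict Implicit. Unset Printing Implicit Defensive.
Import Order.TTheory GRing.Theory Num.Theory.
Local Open Scope ring_scope.

Section SEA.
Variable R : realType.

(* Moore--Penrose pseudoinverse: the (unique) matrix satisfying the four
   Penrose conditions (over the reals, transpose = conjugate transpose). *)
Definition penrose (p q : nat) (M : 'M[R]_(p, q)) (P : 'M[R]_(q, p)) : Prop :=
  [/\ M *m P *m M = M, P *m M *m P = P,
      (M *m P)^T = M *m P & (P *m M)^T = P *m M].

Definition pinv (p q : nat) (M : 'M[R]_(p, q)) : 'M[R]_(q, p) :=
  epsilon (inhabits 0) (penrose M).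

Definition better (n : nat) (v : 'cV[R]_n) (j i : 'I_n) : bool :=
  (`|v i 0| < `|v j 0|) || ((`|v j 0| == `|v i 0|) && (i < j)%N).

(* largest_k(v): indices of the k entries of largest absolute value
   (ties broken by selecting the highest indices). *)
Definition largest (n k : nat) (v : 'cV[R]_n) : {set 'I_n} :=
  [set i | (#|[set j | better v j i]| < k)%N].

Definition colsubset (m n : nat) (A : 'M[R]_(m, n)) (S : {set 'I_n})
  : 'M[R]_(m, #|S|) := colsub (fun j : 'I_#|S| => enum_val j) A.

(* x with x_i = 0 off S and x_S = A_S^dagger y. *)
Definition ls_on (m n : nat) (A : 'M[R]_(m, n)) (y : 'cV[R]_m) (S : {set 'I_n})
  : 'cV[R]_n :=
  let z := pinv (colsubset A S) *m y in
  \col_i \sum_(j < #|S| | enum_val j == i) z j 0.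

Variables (m n k : nat) (A : 'M[R]_(m, n)) (y : 'cV[R]_m) (eta : R)
          (X0 : 'cV[R]_n).

Fixpoint seaX (t : nat) : 'cV[R]_n :=
  match t with
  | 0 => X0
  | t'.+1 =>
      let X := seaX t' in
      X - eta *: (A^T *m (A *m ls_on A y (largest k X) - y))
  end.

Definition seaS (t : nat) : {set 'I_n} := largest k (seaX t).
Definition seax (t : nat) : 'cV[R]_n := ls_on A y (seaS t).

Variable xs : 'cV[R]_n.
Definition supp (v : 'cV[R]_n) : {set 'I_n} := [set i | v i 0 != 0].

Definition oracle_u (t : nat) : 'cV[R]_n :=
  \col_i (if i \in supp xs :\: seaS t then - eta * xs i 0 else 0).

Definition seab (t : nat) : 'cV[R]_n :=
  oracle_u t - eta *: (A^T *m (A *m seax t - y)).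

Definition count_c (t : nat) (i : 'I_n) : nat :=
  #|[set t' : 'I_t | i \in supp xs :\: seaS t']|.

End SEA.

Definition norminf (R : realType) (n : nat) (v : 'cV[R]_n) : R :=
  \big[Num.max/0]_(i < n) `|v i 0|.

From HB Require Import structures.
From mathcomp Require Import all_boot all_order all_algebra.
From mathcomp Require Import boolp classical_sets reals constructive_ereal ereal.
From mathcomp Require Import ring lra.
Import Order.TTheory GRing.Theory Num.Theory.
Set Implicit Arguments.
Unset Strict Implicit.
Unset Printing Implicit Defensive.

Local Open Scope ring_scope.

(** Since [X^(t+1) = X^t + b^t - u^t], an index off the support drifts by at
    most [B] per step, while an index [i] of the support is pushed towards
    [sign(x*_i)] by [eta |x*_i|] at each of the [c^t_i] steps at which it is
    missed, up to a drift of [B] per step.  Once [eta |x*_i| c^t_i] exceeds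
    the initial gap plus twice the accumulated drift, [|X^t_i|] dominates
    every off-support entry, so only the fewer than [k] other support indices
    can beat [i] and [i] is selected: [c_i] stops growing. *)

Section SEABounds.
Variables (R : realType) (m n k : nat) (A : 'M[R]_(m, n)) (y : 'cV[R]_m).
Variables (eta : R) (X0 xs : 'cV[R]_n).

Local Notation X := (seaX k A y eta X0).
Local Notation S := (seaS k A y eta X0).
Local Notation b := (seab k A y eta X0 xs).
Local Notation c := (count_c k A y eta X0 xs).

Lemma seaX_succ t j :
  X t.+1 j 0 =
  X t j 0 + b t j 0 + (if j \in supp xs :\: S t then eta * xs j 0 else 0).
Proof. by rewrite /seab /oracle_u /seax /seaS /= !mxE; case: ifP => _; ring. Qed.

Lemma count_c_sum t i : c t i = (\sum_(t' < t) (i \in supp xs :\: S t'))%N.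
Proof.
rewrite /count_c -sum1_card big_mkcond /=.
by apply: eq_bigr => t' _; rewrite inE; case: (_ \in _).
Qed.

Lemma count_c0 i : c 0 i = 0%N.
Proof. by rewrite count_c_sum big_ord0. Qed.

Lemma count_cS t i : c t.+1 i = (c t i + (i \in supp xs :\: S t))%N.
Proof. by rewrite !count_c_sum big_ord_recr. Qed.

Variable B : R.
Hypothesis b_le : forall t j, `|b t j 0| <= B.

Lemma seaX_offsupp_le j t :
  j \notin supp xs -> `|X t j 0| <= `|X0 j 0| + t%:R * B.
Proof.
move=> j_off; elim: t => [|t IH]; first by rewrite mul0r addr0.
rewrite seaX_succ finset.in_setD (negbTE j_off) andbF addr0 -natr1.
have := ler_normD (X t j 0) (b t j 0); have := b_le t j; lra.
Qed.

Lemma seaX_supp_ge i t :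
  eta * (xs i 0 * xs i 0) * (c t i)%:R - `|xs i 0| * (`|X0 i 0| + t%:R * B)
  <= xs i 0 * X t i 0.
Proof.
elim: t => [|t IH].
  by rewrite count_c0 mulr0 mul0r addr0 sub0r -normrM lerNnormlW.
rewrite seaX_succ count_cS natrD -natr1.
have drift : - (`|xs i 0| * B) <= xs i 0 * b t i 0.
  by rewrite lerNnormlW // normrM ler_wpM2l.
by case: (i \in _); rewrite ?addr0 /=; nra.
Qed.

Variable M : R.
Hypothesis X0_offsupp_le : forall j, j \notin supp xs -> `|X0 j 0| <= M.
Hypothesis supp_le_k : (#|supp xs| <= k)%N.

Lemma in_seaS_of_large i t :
  i \in supp xs -> M + t%:R * B < `|X t i 0| -> i \in S t.
Proof.
move=> i_supp large; rewrite /seaS /largest inE.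
have beat_sub : [set j | better (X t) j i] \subset supp xs :\ i.
  apply/fintype.subsetP => j; rewrite inE /better => j_beats.
  have Xij : `|X t i 0| <= `|X t j 0|.
    by case/orP: j_beats => [/ltW|/andP[/eqP-> _]].
  rewrite finset.in_setD1; apply/andP; split.
    by apply/eqP => ji; move: j_beats; rewrite ji ltxx ltnn andbF.
  apply: contraT => j_off.
  have := seaX_offsupp_le t j_off; have := X0_offsupp_le j_off; lra.
apply: (leq_ltn_trans (subset_leq_card beat_sub)).
by move: supp_le_k; rewrite (cardsD1 i) i_supp.
Qed.

Hypothesis M_ge0 : 0 <= M.
Hypothesis eta_gt0 : 0 < eta.

Lemma count_c_le i t :
  i \in supp xs ->
  (c t i)%:R <= (M + `|X0 i 0| + 2 * t%:R * B) / (eta * `|xs i 0|) + 1.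
Proof.
move=> i_supp.
have xi_gt0 : 0 < `|xs i 0| by rewrite normr_gt0; move: i_supp; rewrite inE.
have d_gt0 : 0 < eta * `|xs i 0| by rewrite mulr_gt0.
have B_ge0 : 0 <= B := le_trans (normr_ge0 _) (b_le 0 i).
elim: t => [|t IH].
  by rewrite count_c0 mulr0 mul0r addr0 addr_ge0 // divr_ge0 ?addr_ge0 ?(ltW d_gt0).
rewrite count_cS natrD -[t.+1]addn1 natrD.
case: (boolP (i \in _)) => [/finset.setDP[_ /negP i_out]|_] /=.
  have small : `|X t i 0| <= M + t%:R * B.
    by rewrite leNgt; apply/negP => /(in_seaS_of_large i_supp).
  have sq : xs i 0 * xs i 0 = `|xs i 0| * `|xs i 0|.
    by rewrite -normrM -expr2 ger0_norm // sqr_ge0.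
  have pushed : eta * `|xs i 0| * (c t i)%:R <= `|X0 i 0| + t%:R * B + `|X t i 0|.
    rewrite -(ler_pM2l xi_gt0).
    have := seaX_supp_ge i t; rewrite sq.
    have : xs i 0 * X t i 0 <= `|xs i 0| * `|X t i 0| by rewrite -normrM ler_norm.
    lra.
  rewrite lerD2r ler_pdivlMr // mulrC; lra.
rewrite addr0 (le_trans IH) // lerD2r ler_pM2r ?invr_gt0 // lerD2l.
by rewrite ler_wpM2r // ler_pM2l // lerDl.
Qed.

End SEABounds.

Lemma norminf_ge (R : realType) n (v : 'cV[R]_n) j : `|v j 0| <= norminf v.
Proof. exact: (le_bigmax (0 : R) (fun i => `|v i 0|) j). Qed.

(* The smallness assumption on [B] is only used for the finiteness of the
   supremum, and [T'_max] only through [t <= T'_max]. *)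
Theorem propositionC5 (R : realType) (m n k : nat)
  (A : 'M[R]_(m, n)) (xs : 'cV[R]_n) (e : 'cV[R]_m) (X0 : 'cV[R]_n) (eta : R) :
  (0 < m)%N -> (0 < k)%N -> (k < n)%N ->
  (1 <= #|supp xs|)%N -> (#|supp xs| <= k)%N ->
  0 < eta ->
  let y := A *m xs + e in
  let Bsup := ereal_sup [set (norminf (seab k A y eta X0 xs t))%:E | t in setT] in
  let Ssum := \sum_(i in supp xs) (eta * `|xs i 0|)^-1 in
  (Bsup < (2 * Ssum)^-1 %:E)%E ->
  let B := fine Bsup in
  let M0 := \big[Num.max/0]_(j | j \notin supp xs) `|X0 j 0| in
  let Tmax :=
    (\sum_(i in supp xs) (M0 + `|X0 i 0|) / (eta * `|xs i 0|) + k%:R + 1)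
      / (1 - 2 * B * Ssum) in
  let tau i := (M0 + `|X0 i 0| + 2 * Tmax * B) / (eta * `|xs i 0|) in
  forall (i : 'I_n), i \in supp xs ->
  forall t : nat, t%:R <= Tmax ->
    (count_c k A y eta X0 xs t i)%:R <= tau i + 1.
Proof.
move=> _ _ _ _ supp_le_k eta_gt0 y Bsup Ssum Bsup_lt B M0 Tmax tau i i_supp t t_le.
have Bsup_ge t' : ((norminf (seab k A y eta X0 xs t'))%:E <= Bsup)%E.
  by apply: ereal_sup_ubound; exists t'.
have Bsup_fin : Bsup \is a fin_num.
  by rewrite fin_real // (lt_le_trans (ltNyr _) (Bsup_ge 0%N)) (lt_trans Bsup_lt) ?ltry.
have b_le t' j : `|seab k A y eta X0 xs t' j 0| <= B.
  by rewrite (le_trans (norminf_ge _ j)) // -lee_fin fineK.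
have B_ge0 : 0 <= B := le_trans (normr_ge0 _) (b_le 0%N i).
have M0_ge0 : 0 <= M0 by rewrite /M0 bigmax_ge_id.
have X0_offsupp_le j : j \notin supp xs -> `|X0 j 0| <= M0.
  by move=> j_off; rewrite (le_bigmax_cond (0 : R) (fun j => `|X0 j 0|) j_off).
have xi_gt0 : 0 < `|xs i 0| by rewrite normr_gt0; move: i_supp; rewrite inE.
rewrite (le_trans (count_c_le b_le X0_offsupp_le supp_le_k M0_ge0 eta_gt0 t i_supp)) //.
by rewrite lerD2r ler_pM2r ?invr_gt0 ?mulr_gt0 // lerD2l ler_wpM2r // ler_pM2l.
Qed.
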